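(* Let $\sigma_1,\sigma_2$ be real $2\times2$ matrices with positive definite symmetric parts $\Sigma_i=\frac{\sigma_i+\sigma_i^T}2$, and $d_i=\det\Sigma_i$. Set $$m=(\sigma_2)_{11}(\sigma_1)_{22}+(\sigma_1)_{11}(\sigma_2)_{22}-\tfrac12\big((\sigma_2)_{12}+(\sigma_2)_{21}\big)\big((\sigma_1)_{12}+(\sigma_1)_{21}\big),$$ $$n=\frac1{\sqrt{d_1d_2}}\Big[\det\sigma_1+\det\sigma_2-\tfrac12\big((\sigma_1)_{21}-(\sigma_1)_{12}\big)\big((\sigma_2)_{21}-(\sigma_2)_{12}\big)\Big].$$ Then $$K^{min}(\sigma_1,\sigma_2)=\sqrt{\frac{m+\sqrt{m^2-4d_1d_2}}{2\sqrt{d_1d_2}}\cdot\frac{n+\sqrt{n^2-4}}{2}}.$$ If moreover $\sigma_1,\sigma_2$ are symmetric, then $K^{min}(\sigma_1,\sigma_2)=\max\{\lambda_1^{-1/2},\lambda_2^{1/2}\}$, where $\lambda_1\le\lambda_2$ are the eigenvalues of $\sigma_1^{-1/2}\sigma_2\sigma_1^{-1/2}$.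
   Context: For a real $2\times2$ matrix $\sigma$ with positive definite symmetric part $\sigma^S$, set $$G(\sigma)=\frac{1}{\sqrt{\det\sigma^S}}\begin{pmatrix}\sigma_{22}&-\frac{\sigma_{12}+\sigma_{21}}2\\-\frac{\sigma_{12}+\sigma_{21}}2&\sigma_{11}\end{pmatrix},\quad H(\sigma)=\frac{1}{\sqrt{\det\sigma^S}}\begin{pmatrix}\det\sigma&\frac{\sigma_{21}-\sigma_{12}}2\\\frac{\sigma_{21}-\sigma_{12}}2&1\end{pmatrix}.$$ With $G_i=G(\sigma_i)$, $H_i=H(\sigma_i)$, $K^{min}(\sigma_1,\sigma_2):=\min_{A,B\in SL(2)}\max_{i=1,2}\lambda_{\max}(B^TG_iB)\lambda_{\max}(A^TH_iA)$, where $SL(2)$ is the set of real $2\times 2$ matrices of determinant $1$ and $\lambda_{\max}$ the largest eigenvalue. $\sigma_1^{-1/2}$ denotes the positive definite square root of $\sigma_1^{-1}$. *)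

(* R is an arbitrary real closed field (rcfType), which
   includes the real numbers; Num.sqrt is the nonnegative square root. *)
From HB Require Import structures.
From mathcomp Require Import all_boot all_order all_algebra.
From Stdlib Require Import ClassicalEpsilon.
Set Implicit Arguments. Unset Strict Implicit. Unset Printing Implicit Defensive.
Import Order.TTheory GRing.Theory Num.Theory.
Local Open Scope ring_scope.

Definition i0 : 'I_2 := ord0.
Definition i1 : 'I_2 := ord_max.

Section Defs.
Variable R : rcfType.

Definition mx2 (a b c d : R) : 'M[R]_2 :=
  \matrix_(i < 2, j < 2)
    if i == i0 then (if j == i0 then a else b) else (if j == i0 then c else d).

Definition sympart (s : 'M[R]_2) : 'M[R]_2 := 2^-1 *: (s + s^T).

Definition posdef (M : 'M[R]_2) : Prop :=
  forall v : 'rV[R]_2, v != 0 -> 0 < (v *m M *m v^T) ord0 ord0.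

Definition SL2 (A : 'M[R]_2) : Prop := \det A = 1.

Definition lambda_max (M : 'M[R]_2) : R :=
  epsilon (inhabits 0)
    (fun l => eigenvalue M l /\ forall a, eigenvalue M a -> a <= l).
Definition lambda_min (M : 'M[R]_2) : R :=
  epsilon (inhabits 0)
    (fun l => eigenvalue M l /\ forall a, eigenvalue M a -> l <= a).

Definition Gm (s : 'M[R]_2) : 'M[R]_2 :=
  (Num.sqrt (\det (sympart s)))^-1 *:
    mx2 (s i1 i1) (- ((s i0 i1 + s i1 i0) / 2))
        (- ((s i0 i1 + s i1 i0) / 2)) (s i0 i0).

Definition Hm (s : 'M[R]_2) : 'M[R]_2 :=
  (Num.sqrt (\det (sympart s)))^-1 *:
    mx2 (\det s) ((s i1 i0 - s i0 i1) / 2)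
        ((s i1 i0 - s i0 i1) / 2) 1.

Definition Kval (s1 s2 A B : 'M[R]_2) : R :=
  Num.max (lambda_max (B^T *m Gm s1 *m B) * lambda_max (A^T *m Hm s1 *m A))
          (lambda_max (B^T *m Gm s2 *m B) * lambda_max (A^T *m Hm s2 *m A)).

Definition is_Kmin (s1 s2 : 'M[R]_2) (k : R) : Prop :=
  (exists A B, SL2 A /\ SL2 B /\ Kval s1 s2 A B = k) /\
  (forall A B, SL2 A -> SL2 B -> k <= Kval s1 s2 A B).

Definition inv_sqrt_mx (s : 'M[R]_2) : 'M[R]_2 :=
  epsilon (inhabits 0)
    (fun S : 'M[R]_2 => S^T = S /\ posdef S /\ S *m S = invmx s).

End Defs.

(* Call a symmetric positive definite 2x2 matrix of determinant one a unimodular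
   form.  Its largest eigenvalue is phi(tr G), where phi(t) = (t + sqrt(t^2-4))/2
   inverts r |-> r + 1/r on [1, oo).  The matrices G(sigma_i) and H(sigma_i) are
   unimodular forms; congruence G |-> B^T G B by B in SL(2) preserves unimodular
   forms and their mixed trace T(G1, G2) = tr(adj G1 G2).  The heart of the proof:
     - lower bound: lambda_max(B^T G1 B) lambda_max(B^T G2 B) >= phi(T(G1, G2)),
       by Cauchy-Schwarz applied to the traceless parts of the two forms;
     - balancing: some B in SL(2) (a Cholesky factor of (adj G1 + adj G2)/w,
       w = sqrt(T + 2)) gives lambda_max(B^T G_i B) = phi(w) for i = 1, 2.
   Since phi(w)^2 = phi(T), the max over i is minimized by optimizing A and B
   separately, so K^min = sqrt(phi(T_G) phi(T_H)).  Computing T_G = m/sqrt(d1 d2)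
   and T_H = n gives the first formula.  For symmetric sigma_i, an explicit square
   root shows that sigma1^{-1/2} sigma2 sigma1^{-1/2} has eigenvalues r phi(T_G)
   and r/phi(T_G) with r = sqrt(d2/d1), while T_H = r + 1/r; this yields the
   second formula.  The file develops, in order: 2x2 matrix calculus and extreme
   eigenvalues, the function phi, unimodular forms, the minimax bounds,
   Sylvester's criterion and the forms G(sigma), H(sigma), the symmetric case,
   and finally the theorem. *)

From HB Require Import structures.
From mathcomp Require Import all_boot all_order all_algebra.
From mathcomp Require Import ring lra.
From Stdlib Require Import ClassicalEpsilon.
Import Order.TTheory GRing.Theory Num.Theory.
Local Open Scope ring_scope.
Set Implicit Arguments. Unset Strict Implicit. Unset Printing Implicit Defensive.

Lemma det2 (T : comNzRingType) (M : 'M[T]_2) :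
  \det M = M i0 i0 * M i1 i1 - M i0 i1 * M i1 i0.
Proof.
rewrite (expand_det_row _ ord0) !big_ord_recl big_ord0 /cofactor !det_mx11 !mxE /=.
rewrite /bump /= expr0 expr1.
have -> : lift (lift ord0 ord0) 0 = i0 :> 'I_2 by apply/val_inj.
have -> : (i1 : 'I_2) = lift ord0 ord0 by apply/val_inj.
by rewrite addr0 mul1r mulN1r mulrN.
Qed.

Section TwoByTwo.
Variable R : rcfType.
Implicit Types (a b c d e f g h : R) (M : 'M[R]_2).

Lemma ord2P (i : 'I_2) : i = i0 \/ i = i1.
Proof. by case: i => [[|[|//]] Hi]; [left|right]; apply/val_inj. Qed.

Lemma mx2_eta M : M = mx2 (M i0 i0) (M i0 i1) (M i1 i0) (M i1 i1).
Proof.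
apply/matrixP => i j; rewrite mxE.
by case: (ord2P i) => ->; case: (ord2P j) => ->.
Qed.

Lemma mx2_00 a b c d : mx2 a b c d i0 i0 = a. Proof. by rewrite mxE. Qed.
Lemma mx2_01 a b c d : mx2 a b c d i0 i1 = b. Proof. by rewrite mxE. Qed.
Lemma mx2_10 a b c d : mx2 a b c d i1 i0 = c. Proof. by rewrite mxE. Qed.
Lemma mx2_11 a b c d : mx2 a b c d i1 i1 = d. Proof. by rewrite mxE. Qed.
Definition mx2E := (mx2_00, mx2_01, mx2_10, mx2_11).

Lemma mx2_mul a b c d e f g h :
  mx2 a b c d *m mx2 e f g h = mx2 (a*e+b*g) (a*f+b*h) (c*e+d*g) (c*f+d*h).
Proof.
apply/matrixP => i j; rewrite !mxE !big_ord_recl big_ord0 !mxE addr0.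
by case: (ord2P i) => ->; case: (ord2P j) => ->.
Qed.

Lemma mx2_tr a b c d : (mx2 a b c d)^T = mx2 a c b d.
Proof.
apply/matrixP => i j; rewrite !mxE.
by case: (ord2P i) => ->; case: (ord2P j) => ->.
Qed.

Lemma mx2_scale k a b c d : k *: mx2 a b c d = mx2 (k*a) (k*b) (k*c) (k*d).
Proof.
apply/matrixP => i j; rewrite !mxE.
by case: (ord2P i) => ->; case: (ord2P j) => ->.
Qed.

Lemma mx2_det a b c d : \det (mx2 a b c d) = a * d - b * c.
Proof. by rewrite det2 !mx2E. Qed.

Lemma mx2_trace a b c d : \tr (mx2 a b c d) = a + d.
Proof.
rewrite /mxtrace !big_ord_recl big_ord0 addr0.
have -> : lift ord0 ord0 = i1 by apply/val_inj.
by rewrite !mx2E.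
Qed.

Lemma trace2 M : \tr M = M i0 i0 + M i1 i1.
Proof. by rewrite {1}(mx2_eta M) mx2_trace. Qed.

Lemma eigenvalue_mx2 M l :
  eigenvalue M l = (l ^+ 2 - \tr M * l + \det M == 0).
Proof.
rewrite eigenvalue_root_char /root /char_poly trace2 !det2 /char_poly_mx !mxE.
rewrite /i0 /i1 /= !hornerE /=; apply/eqP/eqP => H; rewrite -H; ring.
Qed.

Lemma quadratic_root_bounds (t dl S x : R) : S ^+ 2 = t ^+ 2 - 4 * dl -> 0 <= S ->
  x ^+ 2 - t * x + dl = 0 -> (t - S) / 2 <= x <= (t + S) / 2.
Proof.
move=> HS S0 Hx.
have : (x - (t - S) / 2) * (x - (t + S) / 2) = 0.
  by rewrite -Hx (_ : dl = (t ^+ 2 - S ^+ 2) / 4); [field | rewrite HS; field].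
move/eqP; rewrite mulf_eq0 => /orP [] /eqP H; apply/andP; split; lra.
Qed.

Lemma lambda_maxE M l : eigenvalue M l -> (forall a, eigenvalue M a -> a <= l) ->
  lambda_max M = l.
Proof.
move=> Ml Mub; rewrite /lambda_max; set P := fun _ => _.
have [Me Mle] : P (epsilon (inhabits 0) P) by apply: epsilon_spec; exists l.
by apply/eqP; rewrite eq_le Mle // Mub.
Qed.

Lemma lambda_minE M l : eigenvalue M l -> (forall a, eigenvalue M a -> l <= a) ->
  lambda_min M = l.
Proof.
move=> Ml Mlb; rewrite /lambda_min; set P := fun _ => _.
have [Me Mle] : P (epsilon (inhabits 0) P) by apply: epsilon_spec; exists l.
by apply/eqP; rewrite eq_le Mle // Mlb.
Qed.

Lemma lambda_mx2 M : 0 <= \tr M ^+ 2 - 4 * \det M ->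
  lambda_max M = (\tr M + Num.sqrt (\tr M ^+ 2 - 4 * \det M)) / 2 /\
  lambda_min M = (\tr M - Num.sqrt (\tr M ^+ 2 - 4 * \det M)) / 2.
Proof.
move=> disc; set S := Num.sqrt _.
have S0 : 0 <= S by apply: sqrtr_ge0.
have HS : S ^+ 2 = \tr M ^+ 2 - 4 * \det M by rewrite sqr_sqrtr.
have between x : eigenvalue M x -> (\tr M - S) / 2 <= x <= (\tr M + S) / 2.
  by rewrite eigenvalue_mx2 => /eqP; apply: quadratic_root_bounds.
have root_eig x : x = (\tr M + S) / 2 \/ x = (\tr M - S) / 2 -> eigenvalue M x.
  rewrite eigenvalue_mx2 (_ : \det M = (\tr M ^+ 2 - S ^+ 2) / 4); last first.
    by rewrite HS; field.
  by case=> ->; apply/eqP; field.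
split.
- by apply: lambda_maxE => [|a /between /andP[]//]; apply: root_eig; left.
- by apply: lambda_minE => [|a /between /andP[]//]; apply: root_eig; right.
Qed.

(* A symmetric matrix has real spectrum: its discriminant is a sum of squares. *)
Lemma sym_disc_ge0 M : M i1 i0 = M i0 i1 -> 0 <= \tr M ^+ 2 - 4 * \det M.
Proof.
move=> MS; rewrite trace2 det2 MS.
have -> : (M i0 i0 + M i1 i1) ^+ 2 - 4 * (M i0 i0 * M i1 i1 - M i0 i1 * M i0 i1)
   = (M i0 i0 - M i1 i1) ^+ 2 + 4 * M i0 i1 ^+ 2 by ring.
by apply: addr_ge0; [exact: sqr_ge0 | apply: mulr_ge0; [lra | exact: sqr_ge0]].
Qed.

End TwoByTwo.

Section Phi.
Variable R : rcfType.
Implicit Types (r t u T : R).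

(* For t >= 2, phi t is the larger root of x^2 - t x + 1, i.e. the inverse of
   r |-> r + 1/r on [1, oo). *)
Definition phi t := (t + Num.sqrt (t ^+ 2 - 4)) / 2.

Lemma phi_ge1 t : 2 <= t -> 1 <= phi t.
Proof. by move=> t2; rewrite /phi; have := sqrtr_ge0 (t ^+ 2 - 4); lra. Qed.

Lemma phi_root t : 2 <= t -> phi t ^+ 2 - t * phi t + 1 = 0.
Proof.
move=> t2; have HS : Num.sqrt (t ^+ 2 - 4) ^+ 2 = t ^+ 2 - 4 by rewrite sqr_sqrtr //; nra.
move: HS; rewrite /phi; set S := Num.sqrt _ => HS.
rewrite (_ : _ + 1 = (S ^+ 2 - (t ^+ 2 - 4)) / 4); last by field.
by rewrite HS subrr mul0r.
Qed.

Lemma phi_char t r : 1 <= r -> r ^+ 2 - t * r + 1 = 0 -> phi t = r.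
Proof.
move=> r1 hr.
have disc : t ^+ 2 - 4 = (2 * r - t) ^+ 2.
  by apply/eqP; rewrite -subr_eq0 -[X in _ == X](mulr0 (-4)) -hr; apply/eqP; ring.
have pos : 0 <= 2 * r - t.
  have : (2 * r - t) * r = r ^+ 2 - 1 by apply/eqP; rewrite -subr_eq0 -hr; apply/eqP; ring.
  nra.
by rewrite /phi disc sqrtr_sqr ger0_norm //; field.
Qed.

(* phi t and its inverse sum to t: the two roots have product 1. *)
Lemma phi_addV t : 2 <= t -> phi t + (phi t)^-1 = t.
Proof.
move=> t2; have p1 := phi_ge1 t2; have := phi_root t2.
have pn : phi t != 0 by rewrite gt_eqF //; lra.
move=> hr; apply/eqP; rewrite -subr_eq0; apply/eqP.
rewrite (_ : _ - t = (phi t ^+ 2 - t * phi t + 1) / phi t); first by rewrite hr mul0r.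
by field.
Qed.

Lemma phi_le t u : 2 <= t -> t <= u -> phi t <= phi u.
Proof.
move=> t2 tu; rewrite /phi ler_pM2r ?invr_gt0 //.
by apply: lerD => //; apply: ler_wsqrtr; nra.
Qed.

Lemma phi_addV_inv r : 0 < r -> phi (r + r^-1) = Num.max r r^-1.
Proof.
move=> r0; have rn : r != 0 by rewrite gt_eqF.
have rr : r * r^-1 = 1 by rewrite mulfV.
have ri : 0 < r^-1 by rewrite invr_gt0.
case: (lerP 1 r) => r1.
- rewrite max_l; last by nra.
  by apply: phi_char => //; field.
- rewrite max_r; last by nra.
  by apply: phi_char; [rewrite invf_ge1 // ltW | field].
Qed.

Lemma sqrt_add2_ge2 T : 2 <= T -> 2 <= Num.sqrt (T + 2).
Proof. by move=> T2; have := sqrtr_ge0 (T + 2); have := @sqr_sqrtr _ (T + 2); nra. Qed.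

(* Doubling formula: phi(sqrt(T + 2))^2 = phi T, since
   (x + 1/x)^2 - 2 = x^2 + 1/x^2. *)
Lemma phi_sqrt T : 2 <= T -> phi (Num.sqrt (T + 2)) ^+ 2 = phi T.
Proof.
move=> T2; set w := Num.sqrt (T + 2).
have hw : w ^+ 2 = T + 2 by rewrite /w sqr_sqrtr //; lra.
have w2 : 2 <= w := sqrt_add2_ge2 T2.
have p1 := phi_ge1 w2; have hp := phi_root w2.
symmetry; apply: phi_char; first by rewrite expr2; nra.
rewrite (_ : T = w ^+ 2 - 2); last by lra.
set p := phi w.
have -> : (p ^+ 2) ^+ 2 - (w ^+ 2 - 2) * p ^+ 2 + 1 =
          (p ^+ 2 - w * p + 1) * (p ^+ 2 + w * p + 1) by ring.
by rewrite hp mul0r.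
Qed.

End Phi.

Section UnimodularForms.
Variable R : rcfType.
Implicit Types (a b c x y z : R) (G B : 'M[R]_2).

(* Symmetric positive definite 2x2 matrices of determinant one. *)
Definition unimodular G : Prop :=
  G i1 i0 = G i0 i1 /\ 0 < G i0 i0 /\ \det G = 1.

(* The mixed trace tr(adj G1 * G2) of two symmetric matrices: the polarization
   of the determinant, det(G1 + G2) = det G1 + det G2 + mixed_tr G1 G2. *)
Definition mixed_tr G1 G2 :=
  G1 i1 i1 * G2 i0 i0 - 2 * G1 i0 i1 * G2 i0 i1 + G1 i0 i0 * G2 i1 i1.

Lemma unimodularP G : unimodular G ->
  exists a b c, G = mx2 a b b c /\ 0 < a /\ a * c - b ^+ 2 = 1.
Proof.
move=> [Gs [G0 G1]]; exists (G i0 i0), (G i0 i1), (G i1 i1); split.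
  by rewrite {1}(mx2_eta G) Gs.
by split=> //; rewrite -G1 det2 Gs expr2.
Qed.

Lemma unimodular_mx2 a b c : 0 < a -> a * c - b ^+ 2 = 1 -> unimodular (mx2 a b b c).
Proof. by move=> a0 hd; rewrite /unimodular mx2_det !mx2E -expr2. Qed.

Lemma mixed_tr_mx2 a b c x y z :
  mixed_tr (mx2 a b b c) (mx2 x y y z) = c * x - 2 * b * y + a * z.
Proof. by rewrite /mixed_tr !mx2E. Qed.

(* A unimodular form has trace at least 2 (its eigenvalues are x and 1/x). *)
Lemma trace_ge2 a b c : 0 < a -> a * c - b ^+ 2 = 1 -> 2 <= a + c.
Proof. by move=> a0 hd; have := sqr_ge0 (a - c); have := sqr_ge0 b; nra. Qed.

Lemma lambda_max_unimodular G : unimodular G -> lambda_max G = phi (\tr G).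
Proof.
move=> /unimodularP [a [b [c [-> [a0 hd]]]]].
have sym : mx2 a b b c i1 i0 = mx2 a b b c i0 i1 by rewrite !mx2E.
have [-> _] := lambda_mx2 (sym_disc_ge0 sym).
by rewrite mx2_det -expr2 hd mulr1.
Qed.

Lemma lambda_max_ge1 G : unimodular G -> 1 <= lambda_max G.
Proof.
move=> UG; rewrite lambda_max_unimodular //; apply: phi_ge1.
by have [a [b [c [-> [a0 hd]]]]] := unimodularP UG; rewrite mx2_trace; apply: trace_ge2 hd.
Qed.

Lemma unimodular_congr G B : unimodular G -> \det B = 1 -> unimodular (B^T *m G *m B).
Proof.
move=> /unimodularP [a [b [c [-> [a0 hd]]]]].
rewrite (mx2_eta B) mx2_det.
set p := B i0 i0; set q := B i0 i1; set r := B i1 i0; set s := B i1 i1 => hB.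
rewrite mx2_tr !mx2_mul /unimodular mx2_det !mx2E.
split; first by ring.
split; last first.
  rewrite (_ : _ - _ = (a * c - b ^+ 2) * (p * s - q * r) ^+ 2); last by ring.
  by rewrite hd hB expr1n mulr1.
rewrite (_ : _ + _ = a * (p * p) + 2 * b * p * r + c * (r * r)); last by ring.
have [r0|rn] := eqVneq r 0.
  have pn : p != 0.
    by apply/eqP => p0; move: hB; rewrite p0 r0 !mul0r mulr0 subr0 => /esym/eqP; rewrite oner_eq0.
  have pp : 0 < p * p by rewrite -expr2 exprn_even_gt0.
  by rewrite r0; nra.
have rr : 0 < r * r by rewrite -expr2 exprn_even_gt0.
by have := sqr_ge0 (a * p + b * r); nra.
Qed.

Lemma mixed_tr_congr G1 G2 B : unimodular G1 -> unimodular G2 -> \det B = 1 ->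
  mixed_tr (B^T *m G1 *m B) (B^T *m G2 *m B) = mixed_tr G1 G2.
Proof.
move=> /unimodularP [a [b [c [-> _]]]] /unimodularP [x [y [z [-> _]]]].
rewrite (mx2_eta B) mx2_det.
set p := B i0 i0; set q := B i0 i1; set r := B i1 i0; set s := B i1 i1 => hB.
rewrite mx2_tr !mx2_mul /mixed_tr !mx2E.
rewrite (_ : _ + _ = (c * x - 2 * b * y + a * z) * (p * s - q * r) ^+ 2); last by ring.
by rewrite hB expr1n mulr1.
Qed.

Lemma mixed_tr_ge2 G1 G2 : unimodular G1 -> unimodular G2 -> 2 <= mixed_tr G1 G2.
Proof.
move=> /unimodularP [a [b [c [-> [a0 ha]]]]] /unimodularP [x [y [z [-> [x0 hx]]]]].
rewrite mixed_tr_mx2.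
have ax : 0 < a * x by apply: mulr_gt0.
suff : a * x * 2 <= a * x * (c * x - 2 * b * y + a * z) by rewrite ler_pM2l.
rewrite (_ : a * x * (_ + _) = x ^+ 2 * (a * c - b ^+ 2) + a ^+ 2 * (x * z - y ^+ 2)
                          + (b * x - a * y) ^+ 2); last by ring.
by rewrite ha hx !mulr1; have := sqr_ge0 (x - a); have := sqr_ge0 (b * x - a * y); nra.
Qed.

End UnimodularForms.

Section MinimaxForms.
Variable R : rcfType.
Implicit Types (a b c x y z p q r : R) (G B : 'M[R]_2).

Lemma cauchy_schwarz2 (al be ga de S U : R) : 0 <= S -> 0 <= U ->
  S ^+ 2 = al ^+ 2 + be ^+ 2 -> U ^+ 2 = ga ^+ 2 + de ^+ 2 ->
  - (S * U) <= al * ga + be * de.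
Proof.
move=> S0 U0 hS hU.
have : (al * ga + be * de) ^+ 2 <= (S * U) ^+ 2.
  rewrite exprMn hS hU (_ : (al ^+ 2 + be ^+ 2) * (ga ^+ 2 + de ^+ 2) =
    (al * ga + be * de) ^+ 2 + (al * de - be * ga) ^+ 2); last by ring.
  by rewrite lerDl sqr_ge0.
have := mulr_ge0 S0 U0; nra.
Qed.

(* Write p + 1/p and q + 1/q for the traces;
   p - 1/p and q - 1/q are the norms of the traceless parts, and the bound is
   Cauchy-Schwarz for these traceless parts. *)
Lemma mixed_tr_le a b c x y z : 0 < a -> a * c - b ^+ 2 = 1 -> 0 < x -> x * z - y ^+ 2 = 1 ->
  c * x - 2 * b * y + a * z <= phi (a + c) * phi (x + z) + (phi (a + c) * phi (x + z))^-1.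
Proof.
move=> a0 ha x0 hx; set p := phi (a + c); set q := phi (x + z).
have s2 := trace_ge2 a0 ha; have u2 := trace_ge2 x0 hx.
have p1 := phi_ge1 s2; have q1 := phi_ge1 u2.
have hp := phi_addV s2; have hq := phi_addV u2; rewrite -/p in p1 hp; rewrite -/q in q1 hq.
have pn : p != 0 by rewrite gt_eqF //; lra.
have qn : q != 0 by rewrite gt_eqF //; lra.
have pV : p^-1 <= 1 by rewrite invf_le1 //; lra.
have qV : q^-1 <= 1 by rewrite invf_le1 //; lra.
have traceless (u v w : R) (h : R) : h + h^-1 = u + w -> u * w - v ^+ 2 = 1 -> h != 0 ->
    (h - h^-1) ^+ 2 = (u - w) ^+ 2 + (2 * v) ^+ 2.
  move=> sum det hn; rewrite (_ : (h - h^-1) ^+ 2 = (h + h^-1) ^+ 2 - 4); last by field.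
  by rewrite sum exprMn (_ : v ^+ 2 = u * w - 1); [ring | lra].
have CS : - ((p - p^-1) * (q - q^-1)) <= (a - c) * (x - z) + (2 * b) * (2 * y).
  by apply: cauchy_schwarz2; [lra | lra | exact: traceless | exact: traceless].
have E1 : 2 * (c * x - 2 * b * y + a * z) =
          (a + c) * (x + z) - ((a - c) * (x - z) + (2 * b) * (2 * y)) by ring.
have E2 : 2 * (p * q + (p * q)^-1) =
          (p + p^-1) * (q + q^-1) + (p - p^-1) * (q - q^-1) by field; rewrite pn qn.
rewrite hp hq in E2; lra.
Qed.

Lemma lambda_max_prod_ge G1 G2 B : unimodular G1 -> unimodular G2 -> \det B = 1 ->
  phi (mixed_tr G1 G2) <= lambda_max (B^T *m G1 *m B) * lambda_max (B^T *m G2 *m B).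
Proof.
move=> U1 U2 hB; have T2 := mixed_tr_ge2 U1 U2.
have V1 := unimodular_congr U1 hB; have V2 := unimodular_congr U2 hB.
rewrite -(mixed_tr_congr U1 U2 hB) in T2 *.
rewrite !lambda_max_unimodular //.
move: V1 V2 T2 => /unimodularP [a [b [c [-> [a0 ha]]]]] /unimodularP [x [y [z [-> [x0 hx]]]]].
rewrite mixed_tr_mx2 !mx2_trace => T2.
have p1 := phi_ge1 (trace_ge2 a0 ha); have q1 := phi_ge1 (trace_ge2 x0 hx).
have pq1 : 1 <= phi (a + c) * phi (x + z) by nra.
apply: le_trans (phi_le T2 (mixed_tr_le a0 ha x0 hx)) _.
have inv_le : (phi (a + c) * phi (x + z))^-1 <= phi (a + c) * phi (x + z).
  by apply: le_trans (pq1); rewrite invf_le1 // (lt_le_trans ltr01 pq1).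
by rewrite phi_addV_inv ?max_l //; lra.
Qed.

(* Cholesky: a unimodular form with entries p, q, r is B B^T for some B in SL(2),
   so the trace of B^T G B is the pairing of G with that form. *)
Lemma cholesky_congr p q r : 0 < p -> p * r - q ^+ 2 = 1 ->
  exists B, \det B = 1 /\
    forall a b c, \tr (B^T *m mx2 a b b c *m B) = a * p + 2 * b * q + c * r.
Proof.
move=> p0 hd; set t := Num.sqrt p.
have t0 : 0 < t by rewrite sqrtr_gt0.
have tn : t != 0 by rewrite gt_eqF.
have ht : t ^+ 2 = p by rewrite sqr_sqrtr // ltW.
have hr : r = (q ^+ 2 + 1) / t ^+ 2 by rewrite ht -hd; field; rewrite gt_eqF.
exists (mx2 t 0 (q / t) t^-1); split; first by rewrite mx2_det; field.
move=> a b c; rewrite mx2_tr !mx2_mul mx2_trace hr -ht.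
by field.
Qed.

(* The form (adj G1 + adj G2)/w
   is unimodular and pairs to w with both G1 and G2. *)
Lemma balancing_congr G1 G2 : unimodular G1 -> unimodular G2 ->
  let w := Num.sqrt (mixed_tr G1 G2 + 2) in
  exists B, \det B = 1 /\ lambda_max (B^T *m G1 *m B) = phi w /\
                         lambda_max (B^T *m G2 *m B) = phi w.
Proof.
move=> U1 U2 w; have T2 := mixed_tr_ge2 U1 U2.
have hw : w ^+ 2 = mixed_tr G1 G2 + 2 by rewrite sqr_sqrtr //; lra.
have w0 : 0 < w by rewrite sqrtr_gt0; lra.
have wn : w != 0 by rewrite gt_eqF.
have [a [b [c [E1 [a0 ha]]]]] := unimodularP U1.
have [x [y [z [E2 [x0 hx]]]]] := unimodularP U2.
rewrite E1 E2 mixed_tr_mx2 in T2 hw.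
have c0 : 0 < c by nra.
have z0 : 0 < z by nra.
have pos : 0 < (c + z) / w by apply: divr_gt0 => //; lra.
have [B [hB trB]] : exists B, \det B = 1 /\ forall a' b' c',
    \tr (B^T *m mx2 a' b' b' c' *m B) = a' * ((c + z) / w) + 2 * b' * (- (b + y) / w)
                                         + c' * ((a + x) / w).
  apply: cholesky_congr => //.
  rewrite (_ : _ - _ = ((a * c - b ^+ 2) + (x * z - y ^+ 2) + (c * x - 2 * b * y + a * z))
                        / w ^+ 2); last by field.
  by rewrite ha hx hw addrC divff // gt_eqF //; lra.
have pair (u v t : R) : u * t - v ^+ 2 = 1 ->
    u * (c + z) - 2 * v * (b + y) + t * (a + x) =
      2 * (u * t - v ^+ 2) + (c * x - 2 * b * y + a * z) ->
    u * ((c + z) / w) + 2 * v * (- (b + y) / w) + t * ((a + x) / w) = w.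
  move=> huv E; rewrite (_ : _ + _ = (u * (c + z) - 2 * v * (b + y) + t * (a + x)) / w);
    last by field.
  by rewrite E huv mulr1 addrC -hw expr2 mulfK.
exists B; split => //.
rewrite !lambda_max_unimodular; try exact: unimodular_congr.
by rewrite E1 E2 !trB !pair //; ring.
Qed.

Lemma sqrt_le_max (k u v : R) : 0 <= u -> 0 <= v -> k <= u * v ->
  Num.sqrt k <= Num.max u v.
Proof.
move=> u0 v0 kuv.
have m0 : 0 <= Num.max u v by rewrite le_max u0.
rewrite -(ger0_norm m0) -sqrtr_sqr ler_wsqrtr // (le_trans kuv) // expr2.
by apply: ler_pM; rewrite ?le_max ?lexx ?orbT.
Qed.

(* The minimax value is the geometric mean of the two separate optima: for the
   G-forms (optimized over B) and for the H-forms (optimized over A). *)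
Lemma Kmin_unimodular (s1 s2 : 'M[R]_2) :
  unimodular (Gm s1) -> unimodular (Gm s2) -> unimodular (Hm s1) -> unimodular (Hm s2) ->
  is_Kmin s1 s2 (Num.sqrt (phi (mixed_tr (Gm s1) (Gm s2)) * phi (mixed_tr (Hm s1) (Hm s2)))).
Proof.
move=> G1 G2 H1 H2.
have TG := mixed_tr_ge2 G1 G2; have TH := mixed_tr_ge2 H1 H2.
have phi0 T : 2 <= T -> 0 <= phi T by move=> /phi_ge1; apply: le_trans.
split.
- have [B [hB [e1 e2]]] := balancing_congr G1 G2.
  have [A [hA [f1 f2]]] := balancing_congr H1 H2.
  exists A, B; do 2!split => //.
  rewrite /Kval e1 e2 f1 f2 maxxx -(phi_sqrt TG) -(phi_sqrt TH) -exprMn sqrtr_sqr.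
  by rewrite ger0_norm // mulr_ge0 // phi0 // sqrt_add2_ge2.
- move=> A B hA hB; rewrite /Kval.
  have x1 := lambda_max_ge1 (unimodular_congr G1 hB).
  have x2 := lambda_max_ge1 (unimodular_congr G2 hB).
  have y1 := lambda_max_ge1 (unimodular_congr H1 hA).
  have y2 := lambda_max_ge1 (unimodular_congr H2 hA).
  apply: sqrt_le_max; [apply: mulr_ge0; lra | apply: mulr_ge0; lra |].
  rewrite [X in _ <= X]mulrACA; apply: ler_pM; [exact: phi0 TG | exact: phi0 TH | |];
    exact: lambda_max_prod_ge.
Qed.

End MinimaxForms.

Section Sylvester.
Variable R : rcfType.
Implicit Types (a b d h x y : R).

Definition vec2 x y : 'rV[R]_2 := \row_j (if j == i0 then x else y).

Lemma vec2_eta (v : 'rV[R]_2) : v = vec2 (v ord0 i0) (v ord0 i1).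
Proof. by apply/matrixP => i j; rewrite !mxE (ord1 i); case: (ord2P j) => ->. Qed.

Lemma vec2_eq0 x y : (vec2 x y == 0) = (x == 0) && (y == 0).
Proof.
apply/eqP/andP => [E | [/eqP-> /eqP->]].
  by split; apply/eqP; [move/(congr1 (fun v : 'rV[R]_2 => v ord0 i0)): E
                       | move/(congr1 (fun v : 'rV[R]_2 => v ord0 i1)): E]; rewrite !mxE.
by apply/matrixP => i j; rewrite !mxE; case: ifP.
Qed.

Lemma qform_mx2 a b h d x y :
  (vec2 x y *m mx2 a b h d *m (vec2 x y)^T) ord0 ord0 = a * x ^+ 2 + (b + h) * x * y + d * y ^+ 2.
Proof. by rewrite !mxE !big_ord_recl big_ord0 !mxE !big_ord_recl !big_ord0 !mxE /=; ring. Qed.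

Lemma posdef_mx2 a h d : posdef (mx2 a h h d) <-> 0 < a /\ 0 < a * d - h ^+ 2.
Proof.
split=> [P | [a0 hd] v].
  have Pa := P (vec2 1 0); have Ph := P (vec2 (- h) a).
  rewrite !qform_mx2 !vec2_eq0 ?oner_eq0 in Pa Ph.
  have a0 : 0 < a by move: Pa; rewrite expr1n expr0n /= => /(_ isT); lra.
  split=> //; rewrite -(pmulr_rgt0 _ a0).
  have := Ph; rewrite (gt_eqF a0) andbF => /(_ isT).
  by rewrite (_ : _ + _ = a * (a * d - h ^+ 2)); last by ring.
rewrite (vec2_eta v) vec2_eq0 qform_mx2; set x := v ord0 i0; set y := v ord0 i1 => nz.
rewrite -(pmulr_rgt0 _ a0) (_ : a * (_ + _) = (a * x + h * y) ^+ 2 + (a * d - h ^+ 2) * y ^+ 2); last by ring.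
have [y0|yn] := eqVneq y 0.
  have xn : x != 0 by move: nz; rewrite y0 eqxx andbT.
  by rewrite y0 expr0n /= !mulr0 !addr0 exprn_even_gt0 // mulf_neq0 // gt_eqF.
by apply: ltr_pwDr; rewrite ?sqr_ge0 // mulr_gt0 // exprn_even_gt0.
Qed.

End Sylvester.

Section CoefficientForms.
Variable R : rcfType.
Implicit Types (s : 'M[R]_2).

Lemma sympart_mx2 s : sympart s =
  mx2 (s i0 i0) ((s i0 i1 + s i1 i0) / 2) ((s i0 i1 + s i1 i0) / 2) (s i1 i1).
Proof.
apply/matrixP => i j; rewrite /sympart !mxE.
by case: (ord2P i) => ->; case: (ord2P j) => -> /=; rewrite ?eqxx /=; field.
Qed.

Lemma sympart_posdef s : posdef (sympart s) ->
  0 < s i0 i0 /\ 0 < \det (sympart s) /\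
  \det (sympart s) = s i0 i0 * s i1 i1 - ((s i0 i1 + s i1 i0) / 2) ^+ 2.
Proof. by rewrite sympart_mx2 mx2_det -expr2 => /posdef_mx2 []. Qed.

Lemma unimodular_scale (a b c : R) : 0 < a -> 0 < a * c - b ^+ 2 ->
  unimodular ((Num.sqrt (a * c - b ^+ 2))^-1 *: mx2 a b b c).
Proof.
move=> a0 D0; set k := (Num.sqrt _)^-1.
have k0 : 0 < k by rewrite invr_gt0 sqrtr_gt0.
have hk : k ^+ 2 * (a * c - b ^+ 2) = 1.
  by rewrite exprVn sqr_sqrtr ?mulVf // ?gt_eqF // ltW.
rewrite mx2_scale; apply: unimodular_mx2; first exact: mulr_gt0.
by rewrite -hk; ring.
Qed.

(* G(sigma) and H(sigma) are unimodular forms (det H = det sigma^S / det sigma^S). *)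
Lemma unimodular_Gm s : posdef (sympart s) -> unimodular (Gm s).
Proof.
move=> /sympart_posdef [a0 [D0 hD]]; move: D0; rewrite /Gm hD.
set h := (s i0 i1 + s i1 i0) / 2 => D0.
have e0 : 0 < s i1 i1.
  by rewrite -(pmulr_rgt0 _ a0); have := sqr_ge0 h; lra.
rewrite (_ : s i0 i0 * _ - h ^+ 2 = s i1 i1 * s i0 i0 - (- h) ^+ 2); last by ring.
by apply: unimodular_scale; rewrite // sqrrN mulrC.
Qed.

Lemma unimodular_Hm s : posdef (sympart s) -> unimodular (Hm s).
Proof.
move=> /sympart_posdef [_ [D0 hD]]; rewrite /Hm.
set k := (s i1 i0 - s i0 i1) / 2.
have hD' : \det (sympart s) = \det s * 1 - k ^+ 2 by rewrite hD det2 /k; field.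
have d0 : 0 < \det s by have := sqr_ge0 k; lra.
by rewrite hD'; apply: unimodular_scale; rewrite -?hD'.
Qed.

Lemma mixed_tr_Gm s1 s2 : posdef (sympart s1) -> posdef (sympart s2) ->
  mixed_tr (Gm s1) (Gm s2) = (Num.sqrt (\det (sympart s1) * \det (sympart s2)))^-1 *
     (s2 i0 i0 * s1 i1 i1 + s1 i0 i0 * s2 i1 i1
      - 2^-1 * (s2 i0 i1 + s2 i1 i0) * (s1 i0 i1 + s1 i1 i0)).
Proof.
move=> /sympart_posdef [_ [D1 _]] /sympart_posdef [_ [D2 _]].
rewrite sqrtrM ?ltW // invfM /mixed_tr /Gm !mx2_scale !mx2E.
by field; rewrite !gt_eqF ?sqrtr_gt0.
Qed.

Lemma mixed_tr_Hm s1 s2 : posdef (sympart s1) -> posdef (sympart s2) ->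
  mixed_tr (Hm s1) (Hm s2) = (Num.sqrt (\det (sympart s1) * \det (sympart s2)))^-1 *
     (\det s1 + \det s2 - 2^-1 * (s1 i1 i0 - s1 i0 i1) * (s2 i1 i0 - s2 i0 i1)).
Proof.
move=> /sympart_posdef [_ [D1 _]] /sympart_posdef [_ [D2 _]].
rewrite sqrtrM ?ltW // invfM /mixed_tr /Hm !mx2_scale !mx2E.
by field; rewrite !gt_eqF ?sqrtr_gt0.
Qed.

Lemma phi_scaled (m e : R) : 0 < e ->
  (m + Num.sqrt (m ^+ 2 - 4 * e)) / (2 * Num.sqrt e) = phi ((Num.sqrt e)^-1 * m).
Proof.
move=> e0; set D := Num.sqrt e.
have D0 : 0 < D by rewrite sqrtr_gt0.
have hD : D ^+ 2 = e by rewrite sqr_sqrtr // ltW.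
rewrite /phi (_ : (D^-1 * m) ^+ 2 - 4 = D^-1 ^+ 2 * (m ^+ 2 - 4 * e)); last first.
  by rewrite -hD; field; rewrite gt_eqF.
rewrite sqrtrM ?sqr_ge0 // sqrtr_sqr ger0_norm ?invr_ge0 ?ltW //.
by field; rewrite gt_eqF.
Qed.

End CoefficientForms.

Section SymmetricCase.
Variable R : rcfType.
Implicit Types (a b e x y z r p T : R).

Lemma mx2_id : (1%:M : 'M[R]_2) = mx2 1 0 0 1.
Proof.
apply/matrixP => i j; rewrite !mxE.
by case: (ord2P i) => ->; case: (ord2P j) => ->.
Qed.

Lemma invmx_mx2 a b e : a * e - b ^+ 2 != 0 ->
  invmx (mx2 a b b e) = (a * e - b ^+ 2)^-1 *: mx2 e (- b) (- b) a.
Proof.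
move=> Dn.
have unit : mx2 a b b e \in unitmx by rewrite unitmxE unitfE mx2_det -expr2.
have inv : mx2 a b b e *m ((a * e - b ^+ 2)^-1 *: mx2 e (- b) (- b) a) = 1%:M.
  by rewrite mx2_scale mx2_mul mx2_id; congr mx2; field.
by rewrite -[invmx _]mulmx1 -inv mulmxA mulVmx // mul1mx.
Qed.

(* Every symmetric positive definite 2x2 matrix M has a symmetric positive
   definite square root, namely (M + sqrt(det M) I) / sqrt(tr M + 2 sqrt(det M)). *)
Lemma sqrt_spd x y z : 0 < x -> 0 < x * z - y ^+ 2 ->
  exists S, S^T = S /\ posdef S /\ S *m S = mx2 x y y z.
Proof.
move=> x0 D0; set dl := Num.sqrt (x * z - y ^+ 2).
have dl0 : 0 < dl by rewrite sqrtr_gt0.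
have hdl : dl ^+ 2 = x * z - y ^+ 2 by rewrite sqr_sqrtr // ltW.
have z0 : 0 < z by rewrite -(pmulr_rgt0 _ x0); have := sqr_ge0 y; lra.
set w := Num.sqrt (x + z + 2 * dl).
have w0 : 0 < w by rewrite sqrtr_gt0; lra.
have hw : w ^+ 2 = x + z + 2 * dl by rewrite sqr_sqrtr //; lra.
have wn : w != 0 by rewrite gt_eqF.
exists (mx2 ((x + dl) / w) (y / w) (y / w) ((z + dl) / w)); split; first by rewrite mx2_tr.
split.
  apply/posdef_mx2; split; first by apply: divr_gt0 => //; lra.
  rewrite (_ : _ - _ = (x * z - y ^+ 2 + dl * (x + z) + dl ^+ 2) / w ^+ 2); last by field.
  rewrite -hdl (_ : _ + _ = dl * w ^+ 2); last by rewrite hw; ring.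
  by rewrite mulfK // sqrf_eq0.
(* entrywise, S^2 = M reduces to the two relations defining dl and w *)
rewrite mx2_mul; congr mx2; apply/eqP; rewrite -subr_eq0; apply/eqP.
- rewrite (_ : _ - _ = (dl ^+ 2 - (x * z - y ^+ 2) + x * (x + z + 2 * dl - w ^+ 2)) / w ^+ 2);
    last by field.
  by rewrite hdl hw !subrr mulr0 addr0 mul0r.
- rewrite (_ : _ - _ = (y * (x + z + 2 * dl - w ^+ 2)) / w ^+ 2); last by field.
  by rewrite hw subrr mulr0 mul0r.
- rewrite (_ : _ - _ = (y * (x + z + 2 * dl - w ^+ 2)) / w ^+ 2); last by field.
  by rewrite hw subrr mulr0 mul0r.
- rewrite (_ : _ - _ = (dl ^+ 2 - (x * z - y ^+ 2) + z * (x + z + 2 * dl - w ^+ 2)) / w ^+ 2);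
    last by field.
  by rewrite hdl hw !subrr mulr0 addr0 mul0r.
Qed.

Lemma inv_sqrt_mxP a b e : 0 < a -> 0 < a * e - b ^+ 2 ->
  let S := inv_sqrt_mx (mx2 a b b e) in S^T = S /\ S *m S = invmx (mx2 a b b e).
Proof.
move=> a0 D0 S; rewrite /S /inv_sqrt_mx; set P := fun _ => _.
suff [ST [_ SS]] : P (epsilon (inhabits 0) P) by [].
apply: epsilon_spec; rewrite /P invmx_mx2 ?gt_eqF // mx2_scale.
have e0 : 0 < e by rewrite -(pmulr_rgt0 _ a0); have := sqr_ge0 b; lra.
have k0 : 0 < (a * e - b ^+ 2)^-1 by rewrite invr_gt0.
apply: sqrt_spd; first exact: mulr_gt0.
rewrite (_ : _ - _ = (a * e - b ^+ 2)^-1); first by [].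
by field; rewrite gt_eqF.
Qed.

Lemma whitened_mx2 a b e x y z : 0 < a -> 0 < a * e - b ^+ 2 ->
  let S := inv_sqrt_mx (mx2 a b b e) in let N := S *m mx2 x y y z *m S in
  [/\ N i1 i0 = N i0 i1, \tr N = (e * x - 2 * b * y + a * z) / (a * e - b ^+ 2)
    & \det N = (x * z - y ^+ 2) / (a * e - b ^+ 2)].
Proof.
move=> a0 D0 S N; have [ST SS] := inv_sqrt_mxP a0 D0.
have NT : N^T = N by rewrite /N !trmx_mul ST mx2_tr mulmxA.
split.
- by rewrite -{1}NT mxE.
- rewrite /N mxtrace_mulC mulmxA SS invmx_mx2 ?gt_eqF // mx2_scale mx2_mul mx2_trace.
  by field; rewrite gt_eqF.
- rewrite /N !det_mulmx mulrAC -det_mulmx SS det_inv !mx2_det.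
  by rewrite mulrC !expr2.
Qed.

Lemma scaled_roots r T : 0 < r -> 2 <= T ->
  (r * T + Num.sqrt ((r * T) ^+ 2 - 4 * r ^+ 2)) / 2 = r * phi T /\
  (r * T - Num.sqrt ((r * T) ^+ 2 - 4 * r ^+ 2)) / 2 = r / phi T.
Proof.
move=> r0 T2; rewrite (_ : _ - 4 * r ^+ 2 = r ^+ 2 * (T ^+ 2 - 4)); last by ring.
rewrite sqrtrM ?sqr_ge0 // sqrtr_sqr ger0_norm ?ltW //.
have inv : (phi T)^-1 = T - phi T by have := phi_addV T2; lra.
by split; rewrite ?inv /phi; field.
Qed.

Lemma max_sqrt_inv r p : 0 < r -> 0 < p ->
  Num.max (Num.sqrt (r / p))^-1 (Num.sqrt (r * p)) = Num.sqrt (p * Num.max r r^-1).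
Proof.
move=> r0 p0; have ri : 0 < r^-1 by rewrite invr_gt0.
have rr : r * r^-1 = 1 by rewrite mulfV // gt_eqF.
rewrite -sqrtrV ?divr_ge0 ?ltW // invf_div maxr_pMr ?ltW // [r * p]mulrC.
have [r1|r1] := lerP 1 r.
- have le : p / r <= p * r by rewrite ler_pM2l //; nra.
  by rewrite (max_r (ler_wsqrtr le)) (max_l le).
- have le : p * r <= p / r by rewrite ler_pM2l //; nra.
  by rewrite (max_l (ler_wsqrtr le)) (max_r le).
Qed.

Lemma sympart_sym (s : 'M[R]_2) : s^T = s -> sympart s = s.
Proof. by move=> sT; rewrite /sympart sT; apply/matrixP => i j; rewrite !mxE; field. Qed.

Lemma sym_mx2 (s : 'M[R]_2) : s^T = s -> exists a b e, s = mx2 a b b e.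
Proof.
move=> sT; exists (s i0 i0), (s i0 i1), (s i1 i1).
have sym : s i1 i0 = s i0 i1 by rewrite -{1}sT mxE.
by rewrite {1}(mx2_eta s) sym.
Qed.

(* For symmetric sigma_i the value of the theorem's second part is the same
   minimax value: with r = sqrt(d2/d1) the whitened matrix has trace r T_G and
   determinant r^2, while T_H = r + 1/r. *)
Lemma symmetric_value (s1 s2 : 'M[R]_2) :
  posdef (sympart s1) -> posdef (sympart s2) -> s1^T = s1 -> s2^T = s2 ->
  let M := inv_sqrt_mx s1 *m s2 *m inv_sqrt_mx s1 in
  Num.max (Num.sqrt (lambda_min M))^-1 (Num.sqrt (lambda_max M)) =
  Num.sqrt (phi (mixed_tr (Gm s1) (Gm s2)) * phi (mixed_tr (Hm s1) (Hm s2))).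
Proof.
move=> P1 P2 S1 S2 M.
have TG2 := mixed_tr_ge2 (unimodular_Gm P1) (unimodular_Gm P2).
rewrite /M /Gm /Hm !sympart_sym // in P1 P2 TG2 *.
have [a [b [e E1]]] := sym_mx2 S1; have [x [y [z E2]]] := sym_mx2 S2; subst s1 s2.
move: P1 P2 => /posdef_mx2 [a0 D1] /posdef_mx2 [x0 D2].
have [NS trN detN] := whitened_mx2 x y z a0 D1.
move: NS trN detN TG2; set N := _ *m _ *m _ => NS trN detN.
rewrite !mx2_det -!expr2 /mixed_tr !mx2_scale !mx2E.
set u1 := Num.sqrt (a * e - b ^+ 2); set u2 := Num.sqrt (x * z - y ^+ 2).
have u10 : 0 < u1 by rewrite sqrtr_gt0.
have u20 : 0 < u2 by rewrite sqrtr_gt0.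
have hu1 : u1 ^+ 2 = a * e - b ^+ 2 by rewrite sqr_sqrtr // ltW.
have hu2 : u2 ^+ 2 = x * z - y ^+ 2 by rewrite sqr_sqrtr // ltW.
have u1n : u1 != 0 by rewrite gt_eqF.
have u2n : u2 != 0 by rewrite gt_eqF.
set TG := u1^-1 * a * _ - _ + _; set TH := u1^-1 * 1 * _ - _ + _ => TG2.
set r := u2 / u1; have r0 : 0 < r by rewrite divr_gt0.
have trr : \tr N = r * TG by rewrite trN /TG /r -hu1; field; rewrite ?u1n ?u2n.
have detr : \det N = r ^+ 2 by rewrite detN /r -hu1 -hu2; field; rewrite ?u1n ?u2n.
have THr : TH = r + r^-1 by rewrite /TH /r -hu1 -hu2; field; rewrite ?u1n ?u2n.
have [-> ->] := lambda_mx2 (sym_disc_ge0 NS).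
rewrite trr detr; have [-> ->] := scaled_roots r0 TG2.
rewrite max_sqrt_inv // ?THr ?phi_addV_inv //.
by apply: lt_le_trans (phi_ge1 TG2).
Qed.

End SymmetricCase.

Theorem mainTheorem13 (R : rcfType) (s1 s2 : 'M[R]_2) :
  posdef (sympart s1) -> posdef (sympart s2) ->
  let d1 := \det (sympart s1) in
  let d2 := \det (sympart s2) in
  let m := s2 i0 i0 * s1 i1 i1 + s1 i0 i0 * s2 i1 i1
           - 2^-1 * (s2 i0 i1 + s2 i1 i0) * (s1 i0 i1 + s1 i1 i0) in
  let n := (Num.sqrt (d1 * d2))^-1 *
           (\det s1 + \det s2
            - 2^-1 * (s1 i1 i0 - s1 i0 i1) * (s2 i1 i0 - s2 i0 i1)) in
  is_Kmin s1 s2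
    (Num.sqrt ((m + Num.sqrt (m ^+ 2 - 4 * d1 * d2)) / (2 * Num.sqrt (d1 * d2))
               * ((n + Num.sqrt (n ^+ 2 - 4)) / 2)))
  /\
  (s1^T = s1 -> s2^T = s2 ->
   let M := inv_sqrt_mx s1 *m s2 *m inv_sqrt_mx s1 in
   is_Kmin s1 s2
     (Num.max (Num.sqrt (lambda_min M))^-1 (Num.sqrt (lambda_max M)))).
Proof.
move=> P1 P2 d1 d2 m n.
have [_ [D1 _]] := sympart_posdef P1; have [_ [D2 _]] := sympart_posdef P2.
have Kmin := Kmin_unimodular (unimodular_Gm P1) (unimodular_Gm P2)
                             (unimodular_Hm P1) (unimodular_Hm P2).
split.
- rewrite -[4 * d1 * d2]mulrA phi_scaled ?mulr_gt0 // -(mixed_tr_Gm P1 P2).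
  by rewrite -[(n + _) / 2]/(phi n) /n -(mixed_tr_Hm P1 P2).
- by move=> S1 S2 M; rewrite symmetric_value.
Qed.
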